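(* Let $\Omega$ be a finite set and let $f_1,\ldots,f_n\in\mathbb{R}^{\Omega}$ be gambles. Let $$\mathcal M=\{p\in\mathbb{R}^{\Omega}: p\cdot f_i\ge 0 \text{ for } i=1,\ldots,n,\ p\cdot 1_\Omega=1\},$$ and assume $\mathcal M$ is a nonempty credal set (a nonempty, closed, convex set of probability mass vectors) and that for each $i$ there is $p\in\mathcal M$ with $p\cdot f_i=0$. For a gamble $h$ write $\underline{E}(h)=\min_{P\in\mathcal M}P\cdot h$. Let $E\in\mathcal M$, let $h$ be a gamble with $E\cdot h=\underline{E}(h)$, and let $I=\{i: E\cdot f_i=0\}$. For $i\in I$ let $f'_i$ be the unique vector such that $f_i-f'_i=c_i1_\Omega$ for some constant $c_i\in\mathbb{R}$ and $f'_i\cdot 1_\Omega=0$. Then there exist $\alpha'_i\ge 0$ for $i\in I$ and $\beta'\in\mathbb{R}$ such that $$h=\sum_{i\in I}\alpha'_i f'_i+\beta' 1_\Omega.$$ Moreover, $$\Big\|\sum_{i\in I}\alpha'_i f'_i\Big\|\le\Big\|\sum_{i\in I}\alpha'_i f'_i+\beta 1_\Omega\Big\|\quad\text{for every }\beta\in\mathbb{R}.$$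
   Context: Gambles are real-valued maps on the finite set $\Omega$, identified with vectors in $\mathbb{R}^{\Omega}$; $f\cdot g=\sum_{x\in\Omega}f(x)g(x)$ is the standard inner product and $\|f\|=\sqrt{f\cdot f}$ the Euclidean norm; $1_\Omega$ is the constant gamble $1$. Linear previsions are identified with probability mass vectors $P$, with $P(f)=P\cdot f$. *)

From HB Require Import structures.
From mathcomp Require Import all_boot all_order all_algebra.
From mathcomp Require Import reals.
Set Implicit Arguments. Unset Strict Implicit. Unset Printing Implicit Defensive.
Import Order.TTheory GRing.Theory Num.Theory.
Local Open Scope ring_scope.

Definition gamble (R : realType) (Omega : finType) := Omega -> R.

Definition dot (R : realType) (Omega : finType) (f g : gamble R Omega) : R :=
  \sum_(x : Omega) f x * g x.

Definition gamble_norm (R : realType) (Omega : finType) (f : gamble R Omega) : R :=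
  Num.sqrt (dot f f).

Definition one_g (R : realType) (Omega : finType) : gamble R Omega := fun _ => 1.
Arguments one_g : clear implicits.

Definition credalM (R : realType) (Omega : finType) (n : nat)
  (f : 'I_n -> gamble R Omega) (p : gamble R Omega) : Prop :=
  (forall i, 0 <= dot p (f i)) /\ dot p (one_g R Omega) = 1.

Definition attains_lower (R : realType) (Omega : finType)
  (M : gamble R Omega -> Prop) (E h : gamble R Omega) : Prop :=
  forall P, M P -> dot E h <= dot P h.

(* Since E minimises P |-> P . h over M, the derivative of P . h at E is
   nonnegative along every direction d with d . 1 = 0 and d . f_i >= 0 for the
   active constraints: a small enough step from E along d stays in M, because
   the inactive constraints are strict at E.  The f'_i are the projections of
   the f_i onto the hyperplane orthogonal to 1, and projecting the directions
   turns the above into the hypothesis of Farkas' lemma for the f'_i and the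
   projection of h.  Hence that projection is a nonnegative combination of the
   f'_i, and h differs from it by its mean.  The norm inequality is Pythagoras,
   as the combination is orthogonal to 1. *)

From HB Require Import structures.
From mathcomp Require Import all_boot all_order all_algebra.
From mathcomp Require Import reals ring lra.
From Stdlib Require Import Classical.
Set Implicit Arguments. Unset Strict Implicit. Unset Printing Implicit Defensive.
Import Order.TTheory GRing.Theory Num.Theory.
Local Open Scope ring_scope.

Section InnerProduct.
Variables (R : realType) (Omega : finType).
Implicit Types (u v w : gamble R Omega) (c : R).
Local Notation one := (one_g R Omega).

Lemma dotC u v : dot u v = dot v u.
Proof. by apply: eq_bigr => x _; rewrite mulrC. Qed.

Lemma eq_dot u u' v v' : u =1 u' -> v =1 v' -> dot u v = dot u' v'.
Proof. by move=> eq_u eq_v; apply: eq_bigr => x _; rewrite eq_u eq_v. Qed.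

Lemma dot_addZl u v c w : dot (fun x => u x + c * v x) w = dot u w + c * dot v w.
Proof. by rewrite /dot mulr_sumr -big_split; apply: eq_bigr => x _ /=; ring. Qed.

Lemma dot_subZl u v c w : dot (fun x => u x - c * v x) w = dot u w - c * dot v w.
Proof. by rewrite /dot mulr_sumr -sumrB; apply: eq_bigr => x _ /=; ring. Qed.

Lemma dot_subCl u c w : dot (fun x => u x - c) w = dot u w - c * dot one w.
Proof. by rewrite /dot mulr_sumr -sumrB; apply: eq_bigr => x _; rewrite /one_g; ring. Qed.

Lemma dot_suml (I : finType) (P : pred I) (a : I -> R) (u : I -> gamble R Omega) w :
  dot (fun x => \sum_(i | P i) a i * u i x) w = \sum_(i | P i) a i * dot (u i) w.
Proof.
rewrite /dot; under eq_bigr do rewrite mulr_suml.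
by rewrite exchange_big; apply: eq_bigr => i _; rewrite mulr_sumr; apply: eq_bigr => x _ /=; ring.
Qed.

Lemma dot_one_one : dot one one = #|Omega|%:R.
Proof. by rewrite /dot /one_g; under eq_bigr do rewrite mulr1; rewrite sumr_const. Qed.

Lemma card_gt0_dot u v : dot u v != 0 -> (0 < #|Omega|)%N.
Proof. by rewrite lt0n; apply: contraNneq => /card0_eq Omega0; rewrite /dot big_pred0. Qed.

Lemma dot_ge0_eq0 v : (forall d, 0 <= dot v d) -> forall x, v x = 0.
Proof.
move=> v_ge0 x; have := v_ge0 (fun y => - v y).
rewrite /dot; under eq_bigr do rewrite /= mulrN; rewrite sumrN oppr_ge0 => sum_le0.
have sq_ge0 y : 0 <= v y * v y by nra.
have sum0 : \sum_y v y * v y = 0 by apply/eqP; rewrite eq_le sum_le0 sumr_ge0.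
have /eqP := psumr_eq0P (fun y _ => sq_ge0 y) sum0 (i := x) isT.
by rewrite mulf_eq0 orbb => /eqP.
Qed.

Lemma gamble_norm_le_addC v c :
  dot v one = 0 -> gamble_norm v <= gamble_norm (fun x => v x + c).
Proof.
move=> v_one; apply: ler_wsqrtr.
have -> : dot (fun x => v x + c) (fun x => v x + c) =
    dot v v + 2 * c * dot v one + \sum_(x : Omega) c * c.
  by rewrite /dot mulr_sumr -!big_split; apply: eq_bigr => x _; rewrite /one_g /=; ring.
by rewrite v_one mulr0 addr0 lerDl; apply: sumr_ge0 => x _; nra.
Qed.

Definition center v : gamble R Omega := fun x => v x - dot v one / #|Omega|%:R.

Lemma dot_centerC u v : dot (center u) v = dot u (center v).
Proof.
by rewrite /center dot_subCl [RHS]dotC dot_subCl (dotC v u) (dotC one u) (dotC one v); ring.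
Qed.

Hypothesis Omega_gt0 : (0 < #|Omega|)%N.

Let card_neq0 : #|Omega|%:R != 0 :> R.
Proof. by rewrite pnatr_eq0 -lt0n. Qed.

Lemma dot_center_one v : dot (center v) one = 0.
Proof. by rewrite dot_subCl dot_one_one; field. Qed.

Lemma center_shift u v c :
  (forall x, u x - v x = c) -> dot v one = 0 -> center u =1 v.
Proof.
move=> uv v_one x; rewrite /center.
have -> : dot u one = dot (fun x => v x + c * one x) one.
  by apply: eq_dot => // y; rewrite /one_g -(uv y); ring.
by rewrite dot_addZl v_one dot_one_one -(uv x); field.
Qed.

End InnerProduct.

Section Farkas.
Variables (R : realType) (Omega : finType).
Implicit Types (v b d : gamble R Omega).

Definition in_cone (I : finType) (P : pred I) (a : I -> gamble R Omega) b : Prop :=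
  exists2 lam : I -> R, (forall k, 0 <= lam k) & forall x, b x = \sum_(k | P k) lam k * a k x.

Lemma in_cone_predD1 (I : finType) (P : pred I) (a : I -> gamble R Omega) b b' k0 c :
  P k0 -> 0 <= c -> in_cone (predD1 P k0) a b' ->
  (forall x, b x = b' x + c * a k0 x) -> in_cone P a b.
Proof.
move=> Pk0 c_ge0 [mu mu_ge0 def_b'] def_b.
exists (fun k => if k == k0 then c else mu k) => [k | x]; first by case: eqP.
rewrite def_b def_b' [RHS](bigD1 k0) //= eqxx addrC; congr (_ + _).
by apply: eq_big => [k | k /andP [/negbTE -> _]] //=; rewrite andbC.
Qed.

Definition eliminate (a0 x0 v : gamble R Omega) : gamble R Omega :=
  fun x => v x - dot v x0 / dot a0 x0 * a0 x.

Lemma dot_eliminate a0 x0 v d : dot (eliminate a0 x0 v) d = dot v (eliminate x0 a0 d).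
Proof.
rewrite dot_subZl [RHS]dotC dot_subZl (dotC d v) (dotC x0 a0) (dotC d a0) (dotC x0 v); ring.
Qed.

Lemma dot_eliminate_self a0 x0 v : dot a0 x0 != 0 -> dot (eliminate a0 x0 v) x0 = 0.
Proof. by move=> a0x0; rewrite dot_subZl; field. Qed.

Lemma farkas (I : finType) (P : pred I) (a : I -> gamble R Omega) b :
  (forall d, (forall k, P k -> 0 <= dot (a k) d) -> 0 <= dot b d) -> in_cone P a b.
Proof.
move Hm: #|P| => m; elim: m P a b Hm => [|m IH] P a b cardP b_dual.
  have P0 k : P k = false by have := card0_eq cardP k; rewrite !inE.
  exists (fun=> 0) => // x; rewrite big_pred0 //.
  by apply: dot_ge0_eq0 => d; apply: b_dual => k; rewrite P0.
have /card_gt0P [k0 Pk0] : (0 < #|P|)%N by rewrite cardP.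
have cardP' : #|predD1 P k0| = m by apply/eqP; rewrite -eqSS -cardP (cardD1 k0) Pk0.
(* If the dual condition survives dropping k0, induction applies directly.
   Otherwise a witness x0 has a k0 . x0 < 0, and the Fourier--Motzkin step
   [eliminate (a k0) x0] yields a dual condition for a family without k0. *)
case: (classic (exists x0, (forall k, predD1 P k0 k -> 0 <= dot (a k) x0) /\ dot b x0 < 0))
  => [[x0 [a_x0 b_x0]] | no_x0]; last first.
  apply: (in_cone_predD1 Pk0 (lexx 0) (IH _ a b cardP' _)) => [d a_d | x]; last by rewrite mul0r addr0.
  by rewrite leNgt; apply/negP => b_d; apply: no_x0; exists d.
set D := dot (a k0) x0.
have D_lt0 : D < 0.
  rewrite ltNge; apply/negP => D_ge0; move: b_x0; rewrite ltNge b_dual // => k Pk.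
  by case: (eqVneq k k0) => [-> // | k_neq]; apply: a_x0; rewrite /= k_neq.
have [mu mu_ge0 def_b'] :
    in_cone (predD1 P k0) (fun k => eliminate (a k0) x0 (a k)) (eliminate (a k0) x0 b).
  apply: IH => // d a'_d; rewrite dot_eliminate; apply: b_dual => k Pk.
  have [-> | k_neq] := eqVneq k k0; first by rewrite dotC dot_eliminate_self // dotC ltr0_neq0.
  by rewrite -dot_eliminate; apply: a'_d; rewrite /= k_neq.
pose S := \sum_(k | predD1 P k0 k) mu k * dot (a k) x0.
have S_ge0 : 0 <= S by apply: sumr_ge0 => k Pk; apply: mulr_ge0 => //; apply: a_x0.
have cone_b' : in_cone (predD1 P k0) a (fun x => \sum_(k | predD1 P k0 k) mu k * a k x).
  by exists mu.
apply: (in_cone_predD1 (c := (S - dot b x0) / - D) Pk0 _ cone_b'); first by apply: divr_ge0; lra.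
move=> x; have := def_b' x; rewrite /eliminate.
have -> : \sum_(k | predD1 P k0 k) mu k * (a k x - dot (a k) x0 / D * a k0 x) =
    \sum_(k | predD1 P k0 k) mu k * a k x - S / D * a k0 x.
  by rewrite /S !mulr_suml -sumrB; apply: eq_bigr => k _; field; rewrite ltr0_neq0.
by move=> def_b; apply: (subIr (dot b x0 / D * a k0 x)); rewrite def_b; field; rewrite ltr0_neq0.
Qed.

End Farkas.

Section CredalSet.
Variables (R : realType) (Omega : finType) (n : nat) (f : 'I_n -> gamble R Omega).
Local Notation one := (one_g R Omega).
Implicit Types (E h d : gamble R Omega).

Lemma credalM_step E d :
  credalM f E -> dot d one = 0 -> (forall i, dot E (f i) = 0 -> 0 <= dot d (f i)) ->
  exists2 t, 0 < t & credalM f (fun x => E x + t * d x).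
Proof.
move=> [E_f E_one] d_one d_active.
pose K := \sum_i `|dot d (f i)| / dot E (f i).
have K_ge0 : 0 <= K by apply: sumr_ge0 => i _; apply: divr_ge0.
have K_ge i : `|dot d (f i)| / dot E (f i) <= K.
  by rewrite /K (bigD1 i) //= lerDl; apply: sumr_ge0 => j _; apply: divr_ge0.
exists (1 + K)^-1; first by rewrite invr_gt0; lra.
split; last by rewrite dot_addZl E_one d_one mulr0 addr0.
move=> i; rewrite dot_addZl.
have [Ei0 | Ei_neq0] := eqVneq (dot E (f i)) 0.
  by rewrite Ei0 add0r mulr_ge0 ?d_active // invr_ge0; lra.
have Ei_gt0 : 0 < dot E (f i) by rewrite lt_def Ei_neq0 E_f.
have := K_ge i; rewrite ler_pdivrMr // => dK.
have := ler_norm (- dot d (f i)); rewrite normrN => d_norm.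
have -> : dot E (f i) + (1 + K)^-1 * dot d (f i) =
    (1 + K)^-1 * ((1 + K) * dot E (f i) + dot d (f i)) by field; lra.
by apply: mulr_ge0; [rewrite invr_ge0 | nra]; lra.
Qed.

Lemma attains_lower_dir_ge0 E h d :
  credalM f E -> attains_lower (credalM f) E h ->
  dot d one = 0 -> (forall i, dot E (f i) = 0 -> 0 <= dot d (f i)) -> 0 <= dot d h.
Proof.
move=> E_M E_min d_one d_active; have [t t_gt0 Et_M] := credalM_step E_M d_one d_active.
by have := E_min _ Et_M; rewrite dot_addZl lerDl pmulr_rge0.
Qed.

End CredalSet.

Theorem corollary3 (R : realType) (Omega : finType) (n : nat)
  (f : 'I_n -> gamble R Omega)
  (* M is a nonempty credal set: nonempty and consisting of probability mass vectors *)
  (Hne : exists p, credalM f p)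
  (Hprob : forall p, credalM f p -> forall x, 0 <= p x)
  (* each constraint is attained with equality somewhere in M *)
  (Htight : forall i, exists p, credalM f p /\ dot p (f i) = 0)
  (E h : gamble R Omega)
  (HE : credalM f E)
  (Hh : attains_lower (credalM f) E h)
  (f' : 'I_n -> gamble R Omega)
  (Hf'c : forall i, dot E (f i) = 0 -> exists c : R, forall x, f i x - f' i x = c)
  (Hf'0 : forall i, dot E (f i) = 0 -> dot (f' i) (one_g R Omega) = 0) :
  exists alpha : 'I_n -> R,
    (forall i, dot E (f i) = 0 -> 0 <= alpha i) /\
    (exists beta' : R,
       forall x, h x = \sum_(i | dot E (f i) == 0) alpha i * f' i x + beta')
    /\
    (forall beta : R,
       gamble_norm (fun x => \sum_(i | dot E (f i) == 0) alpha i * f' i x)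
       <= gamble_norm (fun x => \sum_(i | dot E (f i) == 0) alpha i * f' i x + beta)).
Proof.
have E_one : dot E (one_g R Omega) != 0 by rewrite HE.2 oner_neq0.
have Omega_gt0 := card_gt0_dot E_one.
have center_f i : dot E (f i) = 0 -> center (f i) =1 f' i.
  by move=> Ei0; have [c f_f'] := Hf'c i Ei0; exact: (center_shift Omega_gt0 f_f' (Hf'0 i Ei0)).
have [alpha alpha_ge0 center_h] : in_cone (fun i => dot E (f i) == 0) f' (center h).
  apply: farkas => d f'_d; rewrite dot_centerC dotC.
  apply: attains_lower_dir_ge0 HE Hh (dot_center_one Omega_gt0 d) _ => i Ei0.
  by rewrite dot_centerC (eq_dot (frefl d) (center_f i Ei0)) dotC f'_d ?Ei0.
exists alpha; split; first by move=> i _; exact: alpha_ge0.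
split=> [|beta].
  by exists (dot h (one_g R Omega) / #|Omega|%:R) => x; rewrite -center_h subrK.
apply: gamble_norm_le_addC; rewrite dot_suml big1 // => i /eqP Ei0.
by rewrite Hf'0 ?mulr0.
Qed.
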